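(* For $K>K^*:=\frac{b\sigma_1}{b-\mu_0}$ let $R(K)$ denote the $R$-component of the unique equilibrium $G_3(K)=(S^*,I_1^*,0,0,R^* )$ with positive $S^*,I_1^*,R^*$ (so $R(K)$ is the unique root in $(0,S^{**}-\sigma_1)$ of $f(R,K)=\big(S^{**}-\sigma_1-R+\frac{K}{b}(\mu_0-\mu_4')\big)R+\frac{\rho_1}{\alpha_1}(S^{**}-\sigma_1-R)=0$, where $S^{**}=\frac{K}{b}(b-\mu_0)$). Then $K\mapsto R(K)$ is differentiable on $(K^*,\infty)$ and $$0<K\frac{dR}{dK}<\sigma_1+R(K).$$
   Context: Consider, for $t\ge0$, the system $S'=\big(b(1-\tfrac{N}{K})-\alpha_1I_1-\alpha_2I_2-(\beta_1+\beta_2+\alpha_3)I_{12}-\mu_0\big)S$, $I_1'=\big(b(1-\tfrac{N}{K})+\alpha_1S-\eta_1I_{12}-\gamma_1I_2-\mu_1\big)I_1+\beta_1SI_{12}$, $I_2'=\big(b(1-\tfrac{N}{K})+\alpha_2S-\eta_2I_{12}-\gamma_2I_1-\mu_2\big)I_2+\beta_2SI_{12}$, $I_{12}'=\big(b(1-\tfrac{N}{K})+\alpha_3S+\eta_1I_1+\eta_2I_2-\mu_3\big)I_{12}+(\gamma_1+\gamma_2)I_1I_2$, $R'=\big(b(1-\tfrac{N}{K})-\mu_4'\big)R+\rho_1I_1+\rho_2I_2+\rho_3I_{12}$, where $N=S+I_1+I_2+I_{12}+R$. All parameters $b,K,\alpha_i,\beta_i,\gamma_i,\eta_i,\rho_i,\mu_0,\mu_i'$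 are positive and $\mu_i=\rho_i+\mu_i'$ for $i=1,2,3$; $K$ is regarded as a varying parameter, the others fixed. Standing assumptions: $b>\mu_0$, $b>\mu_i$ ($i=1,2,3$), $b>\mu_4'$, and $\mu_0<\mu_4'<\mu_j'$ for $j=1,2,3$. Set $\sigma_k=(\mu_k-\mu_0)/\alpha_k$ ($k=1,2,3$), assumed to satisfy $\sigma_1<\sigma_2<\sigma_3$. *)

From Stdlib Require Import Reals Lra.
From Coquelicot Require Import Coquelicot.
Open Scope R_scope.

Definition mu1 (rho1 mu1p : R) : R := rho1 + mu1p.

Definition sigma1 (alpha1 rho1 mu1p mu0 : R) : R :=
  (mu1 rho1 mu1p - mu0) / alpha1.

Definition Kstar (b alpha1 rho1 mu1p mu0 : R) : R :=
  b * sigma1 alpha1 rho1 mu1p mu0 / (b - mu0).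

Definition Sss (b mu0 K : R) : R := K / b * (b - mu0).

Definition fRK (b alpha1 rho1 mu1p mu0 mu4p : R) (r K : R) : R :=
  (Sss b mu0 K - sigma1 alpha1 rho1 mu1p mu0 - r + K / b * (mu0 - mu4p)) * r
  + rho1 / alpha1 * (Sss b mu0 K - sigma1 alpha1 rho1 mu1p mu0 - r).

(* With c = (b - mu0)/b, d = (mu4' - mu0)/b, s = sigma1 and p = rho1/alpha1,
   the equation f(R,K) = 0 reads -R^2 + B R + p (cK - s) = 0 with
   B = (c - d) K - s - p.  For K > K^* the constant term is positive, so the
   admissible root is the larger root (B + sqrt(B^2 + 4 p (cK - s)))/2, an
   explicit smooth function of K.  Implicit differentiation gives
   R' = ((c - d) R + p c) / (2R - B), and both bounds on K R' reduce, after
   eliminating R^2 with the equation, to the positivity of d K p (R + s). *)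
From Stdlib Require Import Reals Lra.
From Coquelicot Require Import Coquelicot.
Open Scope R_scope.

Section LargerRoot.

Variables c d s p : R.
Hypothesis p_gt0 : 0 < p.

Definition lin_coef (K : R) : R := (c - d) * K - s - p.

Definition larger_root (K : R) : R :=
  (lin_coef K + sqrt (lin_coef K ^ 2 + 4 * p * (c * K - s))) / 2.

Definition normal_f (r K : R) : R :=
  (c * K - s - r - d * K) * r + p * (c * K - s - r).

Lemma root_gt_lin_coef (r K : R) :
  0 < c * K - s -> 0 < r -> normal_f r K = 0 -> lin_coef K < r.
Proof.
  intros hA hr hf.
  assert (h : r * (r - lin_coef K) = p * (c * K - s))
    by (unfold normal_f, lin_coef in *; nra).
  assert (0 < p * (c * K - s)) by (apply Rmult_lt_0_compat; assumption).
  nra.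
Qed.

Lemma larger_rootE (r K : R) :
  0 < c * K - s -> 0 < r -> normal_f r K = 0 -> r = larger_root K.
Proof.
  intros hA hr hf.
  pose proof (root_gt_lin_coef r K hA hr hf).
  assert (hD : lin_coef K ^ 2 + 4 * p * (c * K - s) = (2 * r - lin_coef K) ^ 2)
    by (unfold normal_f, lin_coef in *; nra).
  unfold larger_root. rewrite hD, sqrt_pow2 by lra. lra.
Qed.

Lemma is_derive_larger_root (K : R) : 0 < c * K - s ->
  is_derive larger_root K
    (((c - d) * larger_root K + p * c) / (2 * larger_root K - lin_coef K)).
Proof.
  intros hA.
  assert (hD : 0 < lin_coef K ^ 2 + 4 * p * (c * K - s))
    by (pose proof (pow2_ge_0 (lin_coef K)); nra).
  pose proof (sqrt_lt_R0 _ hD) as hS.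
  unfold larger_root, lin_coef in *.
  auto_derive; [lra |].
  set (Q := sqrt _) in *.
  replace (2 * (((c - d) * K - s - p + Q) / 2) - ((c - d) * K - s - p)) with Q
    by field.
  field. lra.
Qed.

Lemma K_derive_bounds (r K : R) :
  0 < d -> 0 < c - d -> 0 < s -> 0 < K ->
  0 < r -> r < c * K - s -> normal_f r K = 0 ->
  0 < K * (((c - d) * r + p * c) / (2 * r - lin_coef K)) < s + r.
Proof.
  intros hd hcd hs hK hr hrA hf.
  assert (hden : 0 < 2 * r - lin_coef K)
    by (pose proof (root_gt_lin_coef r K ltac:(lra) hr hf); lra).
  assert (hnum : 0 < (c - d) * r + p * c) by nra.
  (* The equation eliminates r^2 from the difference of the two sides. *)
  assert (hgap : ((s + r) * (2 * r - lin_coef K) - K * ((c - d) * r + p * c))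
                   * (r + p) = d * K * p * (r + s))
    by (unfold normal_f, lin_coef in *; nra).
  assert (0 < d * K * p * (r + s))
    by (repeat apply Rmult_lt_0_compat; lra).
  split.
  - apply Rmult_lt_0_compat; [lra | apply Rdiv_lt_0_compat; assumption].
  - rewrite Rmult_div_assoc. apply Rlt_div_l; nra.
Qed.

End LargerRoot.

Lemma fRK_normal (b alpha1 rho1 mu1p mu0 mu4p r K : R) :
  b <> 0 -> alpha1 <> 0 ->
  fRK b alpha1 rho1 mu1p mu0 mu4p r K =
  normal_f ((b - mu0) / b) ((mu4p - mu0) / b) (sigma1 alpha1 rho1 mu1p mu0)
    (rho1 / alpha1) r K.
Proof. intros hb ha. unfold fRK, normal_f, Sss. field. auto. Qed.

Lemma Kstar_lt (b alpha1 rho1 mu1p mu0 K : R) : 0 < b -> mu0 < b ->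
  Kstar b alpha1 rho1 mu1p mu0 < K ->
  0 < (b - mu0) / b * K - sigma1 alpha1 rho1 mu1p mu0.
Proof.
  intros hb hbmu0 HK.
  replace ((b - mu0) / b * K - sigma1 alpha1 rho1 mu1p mu0)
    with ((b - mu0) / b * (K - Kstar b alpha1 rho1 mu1p mu0))
    by (unfold Kstar; field; lra).
  apply Rmult_lt_0_compat; [apply Rdiv_lt_0_compat |]; lra.
Qed.

Theorem proposition4
  (b alpha1 rho1 mu0 mu1p mu4p : R)
  (hb : 0 < b) (ha1 : 0 < alpha1) (hr1 : 0 < rho1) (hmu0 : 0 < mu0)
  (hmu1p : 0 < mu1p) (hmu4p : 0 < mu4p)
  (hbmu0 : mu0 < b) (hbmu1 : mu1 rho1 mu1p < b) (hbmu4 : mu4p < b)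
  (h04 : mu0 < mu4p) (h41 : mu4p < mu1p)
  (RK : R -> R)
  (hRK : forall K, Kstar b alpha1 rho1 mu1p mu0 < K ->
           0 < RK K < Sss b mu0 K - sigma1 alpha1 rho1 mu1p mu0 /\
           fRK b alpha1 rho1 mu1p mu0 mu4p (RK K) K = 0) :
  forall K, Kstar b alpha1 rho1 mu1p mu0 < K ->
    ex_derive RK K /\
    0 < K * Derive RK K < sigma1 alpha1 rho1 mu1p mu0 + RK K.
Proof.
  set (c := (b - mu0) / b); set (d := (mu4p - mu0) / b).
  set (s := sigma1 alpha1 rho1 mu1p mu0); set (p := rho1 / alpha1).
  assert (hp : 0 < p) by (apply Rdiv_lt_0_compat; assumption).
  assert (hd : 0 < d) by (apply Rdiv_lt_0_compat; lra).
  assert (hcd : 0 < c - d)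
    by (unfold c, d; replace ((b - mu0) / b - (mu4p - mu0) / b) with ((b - mu4p) / b)
          by (field; lra); apply Rdiv_lt_0_compat; lra).
  assert (hs : 0 < s) by (apply Rdiv_lt_0_compat; unfold mu1 in *; lra).
  assert (hc : 0 < c) by lra.
  assert (hroot : forall K, Kstar b alpha1 rho1 mu1p mu0 < K ->
            0 < c * K - s /\ 0 < RK K < c * K - s /\ normal_f c d s p (RK K) K = 0).
  { intros K HK. destruct (hRK K HK) as [hr hf].
    rewrite fRK_normal in hf by lra.
    replace (Sss b mu0 K) with (c * K) in hr by (unfold Sss, c; field; lra).
    split; [exact (Kstar_lt _ _ _ _ _ K hb hbmu0 HK) | tauto]. }
  assert (hRKE : forall K, Kstar b alpha1 rho1 mu1p mu0 < K -> larger_root c d s p K = RK K)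
    by (intros K HK; symmetry; apply larger_rootE; [apply hp | ..]; apply hroot; tauto).
  intros K HK.
  destruct (hroot K HK) as [hA hRK_root].
  assert (hK : 0 < K) by nra.
  pose proof (is_derive_ext_loc _ _ _ _ (filter_imp _ _ hRKE (open_gt _ _ HK))
                (is_derive_larger_root c d s p hp K hA)) as HdR.
  split; [eexists; exact HdR |].
  rewrite (is_derive_unique _ _ _ HdR), hRKE by exact HK.
  apply K_derive_bounds; tauto.
Qed.
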